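(* Let $A$ be a DFA over a finite alphabet $\Sigma$ and let $S=s_1,\ldots,s_l$ be a finite sequence of strings in $\Sigma^*$. In any execution of the prefix-free IDS algorithm on $S$ with teacher $A$, for each $t\geq 0$ the hypothesis automaton $M_t$ constructed by the construction procedure after $t$ input strings have been observed is a well-defined DFA; in particular its transition function is a well-defined function assigning a unique next state to every state $E_i(\alpha)$, $\alpha\in T_k$, and every input $b\in\Sigma$.
   Context: Let $A=\langle\Sigma,Q,F,q_0,\delta\rangle$ be a deterministic finite automaton (DFA) with finite input alphabet $\Sigma$, accepted language $L(A)\subseteq\Sigma^*$, and let $\lambda$ denote the empty string. A membership query asks whether a string lies in $L(A)$ and is answered correctly. Let $d_0$ be a fresh symbol not in $\Sigma^*$ and define $f:(\Sigma^*\cup\{d_0\})\times\Sigma\to\Sigma^*\cup\{d_0\}$ by $f(d_0,b)=d_0$ and $f(\alpha,b)=\alpha b$ for $\alpha\in\Sigma^*$. For sets $U,V$, $U\oplus V=(U-V)\cup(V-U)$. Prefix-free IDS algorithm (input: a sequence $S=s_1,\ldots,s_l$ of strings in $\Sigma^*$). It maintains integers $i,k,t$, distinguishing strings $v_0,\ldots,v_i$, sets $P_k\subseteq\Sigma^*$, $P'_k=P_k\cup\{d_0\}$, $T_k\subseteq\Sigma^*$, and for each $\alpha\in T_k$ a set $E_i(\alpha)\subseteq\{v_0,\ldots,v_i\}$; always $E_i(d_0)=\emptyset$. Refinement procedure (for current $k$): while there exist $\alpha,\beta\in P'_k$ and $b\in\Sigma$ with $E_i(\alpha)=E_i(\beta)$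 but $E_i(f(\alpha,b))\neq E_i(f(\beta,b))$: choose (nondeterministically) such $\alpha,\beta,b$ and some $\gamma\in E_i(f(\alpha,b))\oplus E_i(f(\beta,b))$, set $v_{i+1}=b\gamma$, increase $i$ by one, and for each $\alpha'\in T_k$ set $E_i(\alpha')=E_{i-1}(\alpha')\cup\{v_i\}$ if $\alpha' v_i\in L(A)$ and $E_i(\alpha')=E_{i-1}(\alpha')$ otherwise. Construction procedure (producing $M_t$): the states are the sets $E_i(\alpha)$, $\alpha\in T_k$; the initial state is $E_i(\lambda)$; the accepting states are those $E_i(\alpha)$ ($\alpha\in T_k$) with $\lambda\in E_i(\alpha)$; transitions: for each $\alpha\in P'_k$, if $E_i(\alpha)=\emptyset$ then $\delta(E_i(\alpha),b)=E_i(\alpha)$ for all $b\in\Sigma$, else $\delta(E_i(\alpha),b)=E_i(f(\alpha,b))$ for all $b\in\Sigma$; for each $\beta\in T_k-P'_k$ such that $E_i(\beta)\neq E_i(\alpha)$ for all $\alpha\in P'_k$ and $E_i(\beta)\neq\emptyset$, set $\delta(E_i(\beta),b)=\emptyset$ for all $b\in\Sigma$. Main algorithm: initialize $i=k=t=0$, $v_0=\lambda$, $P_0=\{\lambda\}$, $T_0=\{\lambda\}\cup\Sigma$, and for $\alpha\in T_0$ let $E_0(\alpha)=\{\lambda\}$ if $\alpha\in L(A)$, else $\emptyset$; run the refinement procedure, then the construction procedure, giving $M_0$. Then for each string $\alpha$ of $S$ in order: increase $k$ and $t$ by one; $P_k=P_{k-1}\cup\{\alpha\}$; $T_k=T_{k-1}\cup\{\alpha\}\cup\{\alpha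 b: b\in\Sigma\}$; for each $\beta\in T_k-T_{k-1}$ set $E_i(\beta)=\{v_j: 0\le j\le i,\ \beta v_j\in L(A)\}$; run the refinement procedure; if $M_{t-1}$ accepts $\alpha$ exactly when $\alpha\in L(A)$ then $M_t=M_{t-1}$, else $M_t$ is produced by the construction procedure. The algorithm stops when $S$ is exhausted. *)

From mathcomp Require Import all_boot.
Set Implicit Arguments. Unset Strict Implicit. Unset Printing Implicit Defensive.

Record dfa (Sigma : finType) := DFA {
  dstate : finType;
  dinit : dstate;
  dfinal : pred dstate;
  dtrans : dstate -> Sigma -> dstate }.

Definition dfa_accept (Sigma : finType) (A : dfa Sigma) (w : seq Sigma) : bool :=
  @dfinal Sigma A (foldl (@dtrans Sigma A) (@dinit Sigma A) w).

Section IDS.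
Variables (Sigma : finType) (A : dfa Sigma).
Local Notation word := (seq Sigma).
Local Notation L w := (dfa_accept A w).

(* Sigma^* extended with the fresh symbol d0, encoded as [None]. *)
Definition fext (a : option word) (b : Sigma) : option word :=
  if a is Some w then Some (rcons w b) else None.

(* A configuration of the algorithm: the distinguishing strings v_0..v_i
   (in order), the sets P_k and T_k, and the sets E_i(alpha) (as lists of
   strings, compared as sets with =i; only meaningful for alpha in T_k). *)
Record cfg := Cfg {
  vs : seq word;
  Pk : seq word;
  Tk : seq word;
  Ek : word -> seq word }.

Definition Eo (c : cfg) (a : option word) : seq word :=
  if a is Some w then Ek c w else [::].

Definition inP' (c : cfg) (a : option word) : bool :=
  if a is Some w then w \in Pk c else true.
Definition inT' (c : cfg) (a : option word) : bool :=
  if a is Some w then w \in Tk c else true.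

(* one iteration of the while loop of the refinement procedure,
   adding v_{i+1} = v and updating E for every alpha' in T_k *)
Definition refine_update (c : cfg) (v : word) : cfg :=
  Cfg (rcons (vs c) v) (Pk c) (Tk c)
      (fun a => if (a \in Tk c) && L (a ++ v) then rcons (Ek c a) v else Ek c a).

Definition refine_step (c c' : cfg) : Prop :=
  exists (a b : option word) (x : Sigma) (g : word),
    [/\ inP' c a /\ inP' c b, Eo c a =i Eo c b,
        ~ (Eo c (fext a x) =i Eo c (fext b x)),
        (g \in Eo c (fext a x)) (+) (g \in Eo c (fext b x))
      & c' = refine_update c (x :: g)].

Definition refine_done (c : cfg) : Prop :=
  forall (a b : option word) (x : Sigma), inP' c a -> inP' c b ->
    Eo c a =i Eo c b -> Eo c (fext a x) =i Eo c (fext b x).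

Inductive refines : cfg -> cfg -> Prop :=
  | ref_done c : refine_done c -> refines c c
  | ref_step c c1 c' : refine_step c c1 -> refines c1 c' -> refines c c'.

Definition init_cfg : cfg :=
  Cfg [:: [::]] [:: [::]] ([::] :: [seq [:: b] | b <- enum Sigma])
      (fun a => if L a then [:: [::]] else [::]).

Definition add_string (c : cfg) (al : word) : cfg :=
  Cfg (vs c) (rcons (Pk c) al) (Tk c ++ al :: [seq rcons al b | b <- enum Sigma])
      (fun be => if be \in Tk c then Ek c be else [seq v <- vs c | L (be ++ v)]).

Inductive run_from : cfg -> seq word -> seq cfg -> Prop :=
  | run_nil c : run_from c [::] [::]
  | run_cons c al S c' cs :
      refines (add_string c al) c' -> run_from c' S cs -> run_from c (al :: S) (c' :: cs).

(* an execution of the algorithm on S; the t-th element of cs (t = 0..l) is the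
   configuration from which the construction procedure builds M_t. *)
Definition ids_execution (S : seq word) (cs : seq cfg) : Prop :=
  exists c0 cs', [/\ refines init_cfg c0, run_from c0 S cs' & cs = c0 :: cs'].

(* States of the hypothesis: the sets E_i(alpha), alpha in T_k, together with
   the empty set E_i(d0) (the target of the "dead" transitions). *)
Definition is_state (c : cfg) (s : seq word) : Prop :=
  exists a : option word, inT' c a /\ s =i Eo c a.

(* the transition assignments made by the construction procedure:
   assign c s x s'  means the procedure sets delta(s, x) = s'. *)
Definition assign (c : cfg) (s : seq word) (x : Sigma) (s' : seq word) : Prop :=
  (exists a : option word,
     [/\ inP' c a, s =i Eo c a &
         (if nilp (Eo c a) then s' =i Eo c a else s' =i Eo c (fext a x))])
  \/
  (exists be : word,
     [/\ be \in Tk c /\ be \notin Pk c, s =i Ek c be,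
         (forall a, inP' c a -> ~ (Ek c be =i Eo c a)),
         ~~ nilp (Ek c be) & s' =i [::]]).

Definition construction_wd (c : cfg) : Prop :=
  is_state c (Ek c [::]) /\
  forall (s : seq word) (x : Sigma), is_state c s ->
    (exists s', assign c s x s' /\ is_state c s') /\
    (forall s1 s2, assign c s x s1 -> assign c s x s2 -> s1 =i s2).

End IDS.

From mathcomp Require Import all_boot.
From Stdlib Require Import Classical.
Set Implicit Arguments. Unset Strict Implicit. Unset Printing Implicit Defensive.

(* The only structural fact the construction needs is that every alpha in P'_k
   has its successors f(alpha, b) in T_k + {d0}, so that E_i(f(alpha, b)) is a
   state.  This holds initially, is kept by adding a string of S (which brings
   in its successors), and is untouched by refinement, which never changes
   P_k or T_k.  Given it, every state gets a transition: states E_i(alpha) with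
   alpha in P'_k follow alpha, the others go to the empty state.  Two
   assignments to the same state and letter agree because refinement stops
   only when E_i(alpha) = E_i(beta) forces E_i(f(alpha, b)) = E_i(f(beta, b)),
   and a state hit by the second rule matches no alpha in P'_k. *)

Lemma eq_mem_nilp (T : eqType) (u v : seq T) : u =i v -> nilp u = nilp v.
Proof.
case: u => [|x u]; case: v => [|y v] // uv.
  by have := uv y; rewrite !inE eqxx.
by have := uv x; rewrite !inE eqxx.
Qed.

Lemma nilp_eq_mem0 (T : eqType) (u : seq T) : nilp u -> u =i [::].
Proof. by move/nilP ->. Qed.

Section Construction.
Variable Sigma : finType.
Implicit Types (c : cfg Sigma).

Definition succ_closed c : Prop :=
  [::] \in Tk c /\ forall w b, w \in Pk c -> rcons w b \in Tk c.

Lemma succ_closed_inT' c a b : succ_closed c -> inP' c a -> inT' c (fext a b).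
Proof. by case: a => [w|] // [_ closedP] /= /closedP. Qed.

Lemma assign_followP' c s x a :
    succ_closed c -> inP' c a -> s =i Eo c a ->
  exists s', assign c s x s' /\ is_state c s'.
Proof.
move=> closed_c Pa sa.
case nil_a: (nilp (Eo c a)).
  exists (Eo c a); split; first by left; exists a; rewrite nil_a.
  by exists None; split; last exact: nilp_eq_mem0.
exists (Eo c (fext a x)); split; first by left; exists a; rewrite nil_a.
by exists (fext a x); split=> //; apply: succ_closed_inT'.
Qed.

Lemma assign_total c s x :
  succ_closed c -> is_state c s -> exists s', assign c s x s' /\ is_state c s'.
Proof.
move=> closed_c [[be|] [Tbe sbe]]; last exact: (@assign_followP' c s x None).
case Pbe: (be \in Pk c); first exact: (@assign_followP' c s x (Some be)).
have [[a [Pa bea]] | no_match] :=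
  classic (exists a, inP' c a /\ Ek c be =i Eo c a).
  by apply: (@assign_followP' c s x a) => // y; rewrite sbe bea.
case nil_be: (nilp (Ek c be)).
  by apply: (@assign_followP' c s x None) => //= y; rewrite sbe (nilp_eq_mem0 nil_be).
exists [::]; split; last by exists None.
right; exists be; split; rewrite ?Pbe ?nil_be //.
by move=> a Pa bea; apply: no_match; exists a.
Qed.

Lemma assign_functional c s x s1 s2 :
  refine_done c -> assign c s x s1 -> assign c s x s2 -> s1 =i s2.
Proof.
move=> done_c [[a1 [Pa1 sa1 s1a1]] | [b1 [_ sb1 no1 _ s1nil]]]
              [[a2 [Pa2 sa2 s2a2]] | [b2 [_ sb2 no2 _ s2nil]]].
- have a12 : Eo c a1 =i Eo c a2 by move=> y; rewrite -sa1 sa2.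
  rewrite -(eq_mem_nilp a12) in s2a2.
  case: (nilp (Eo c a1)) s1a1 s2a2 => s1a1 s2a2 y.
    by rewrite s1a1 s2a2 a12.
  by rewrite s1a1 s2a2 (done_c _ _ x Pa1 Pa2 a12).
- by case: (no2 a1 Pa1) => y; rewrite -sb2 sa1.
- by case: (no1 a2 Pa2) => y; rewrite -sb1 sa2.
- by move=> y; rewrite s1nil s2nil.
Qed.

Lemma construction_wd_of c : succ_closed c -> refine_done c -> construction_wd c.
Proof.
move=> closed_c done_c; split; first by exists (Some [::]); case: closed_c.
move=> s x s_state; split; first exact: assign_total.
by move=> s1 s2; apply: assign_functional.
Qed.

Variable A : dfa Sigma.

Lemma refines_keeps_PkTk c c' : refines A c c' -> Pk c' = Pk c /\ Tk c' = Tk c.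
Proof. by elim=> // c0 c1 c2 [a [b [x [g [_ _ _ _ ->]]]]]. Qed.

Lemma refines_done c c' : refines A c c' -> refine_done c'.
Proof. by elim. Qed.

Lemma refines_succ_closed c c' : refines A c c' -> succ_closed c -> succ_closed c'.
Proof. by rewrite /succ_closed => /refines_keeps_PkTk [-> ->]. Qed.

Lemma init_succ_closed : succ_closed (init_cfg A).
Proof.
split=> [|w b]; first by rewrite inE eqxx.
rewrite inE => /eqP -> /=; rewrite inE; apply/orP; right.
by apply/mapP; exists b; rewrite ?mem_enum.
Qed.

Lemma add_string_succ_closed c al : succ_closed c -> succ_closed (add_string A c al).
Proof.
move=> [Tnil closedP]; split=> [|w b] /=; first by rewrite mem_cat Tnil.
rewrite mem_rcons inE mem_cat => /orP [/eqP -> | /closedP -> //].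
by rewrite !inE; apply/orP; right; apply/orP; right; apply/mapP; exists b; rewrite ?mem_enum.
Qed.

Lemma refines_wd c c' : refines A c c' -> succ_closed c -> construction_wd c'.
Proof.
move=> ref closed_c; apply: construction_wd_of (refines_done ref).
exact: refines_succ_closed ref closed_c.
Qed.

Lemma run_from_wd c S cs d t :
  run_from A c S cs -> succ_closed c -> t < size cs -> construction_wd (nth d cs t).
Proof.
move=> run; elim: run t => // c0 al S0 c1 cs0 ref _ IH t closed0.
have closed_added := add_string_succ_closed al closed0.
case: t => [|t] /= t_lt; first exact: refines_wd ref closed_added.
exact: IH t (refines_succ_closed ref closed_added) t_lt.
Qed.

End Construction.

Theorem mainTheorem1 (Sigma : finType) (A : dfa Sigma) (S : seq (seq Sigma))
    (cs : seq (cfg Sigma)) :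
  ids_execution A S cs ->
  forall t : nat, t < size cs -> construction_wd (nth (init_cfg A) cs t).
Proof.
move=> [c0 [cs' [init_ref run ->]]] [|t] /= t_lt.
  exact: refines_wd init_ref (init_succ_closed A).
exact: run_from_wd run (refines_succ_closed init_ref (init_succ_closed A)) t_lt.
Qed.
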